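(* For real parameters $a>0$, $b\ge 0$, $\alpha>0$, $n>0$, let $s^*=s^*(a,b,\alpha,n)$ denote the unique solution in $(0,n)$ of $$\alpha a n s^{-\alpha-1}-(\alpha+1)a s^{-\alpha}-b=0,$$ which is the unique minimizer of $s\mapsto \frac{a s^{-\alpha}+b}{n-s}$ over $s\in(0,n)$. Then: (i) $s^*$ is nondecreasing in $a$, and strictly increasing in $a$ whenever $b>0$; (ii) $s^*$ is strictly decreasing in $b$; (iii) $s^*$ is strictly increasing in $n$; (iv) if $b=0$, then $s^*/n=\alpha/(\alpha+1)$, independent of $a$ and $n$; (v) the fraction $s^*/n$ is nondecreasing in $a$ (strictly increasing if $b>0$), strictly decreasing in $b$, and nonincreasing in $n$; if $b>0$, then $\lim_{n\to\infty} s^*/n=0$; moreover, if $\alpha<1$, $$0\;\ge\;\frac{\partial}{\partial n}\Big(\frac{s^*}{n}\Big)\;\ge\;-\frac{\alpha}{\alpha+1}\,\frac{b}{a}\,n^{\alpha-1}.$$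
   Context: Monotonicity statements refer to $s^*$ (or $s^*/n$) viewed as a function of one parameter with the others held fixed, within the stated parameter ranges. *)

From Stdlib Require Import Reals Lra ClassicalEpsilon.
From Coquelicot Require Import Coquelicot.
Open Scope R_scope.

Definition Feq (a b al n s : R) : R :=
  al * a * n * Rpower s (- al - 1) - (al + 1) * a * Rpower s (- al) - b.

Definition cost (a b al n s : R) : R :=
  (a * Rpower s (- al) + b) / (n - s).

Definition sstar (a b al n : R) : R :=
  epsilon (inhabits 0) (fun s => 0 < s < n /\ Feq a b al n s = 0).

From Stdlib Require Import Reals Lra ClassicalEpsilon.
From Coquelicot Require Import Coquelicot.
Open Scope R_scope.

(* Multiplying the root equation by [s^(al+1) / (al a)] shows that [s] is the root
   for [n] exactly when [n = sstar_inv (b/a) al s], where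
   [sstar_inv c al s = ((al+1) s + c s^(al+1)) / al] is continuous, strictly
   increasing in [s] and in [c], and exceeds [s].  So [s*] is the inverse of
   [sstar_inv (b/a) al]: every monotonicity claim is a monotonicity of
   [sstar_inv], the derivative comes from the inverse function theorem, and
   [s*/n = al / (al + 1 + (b/a) s*^al)].  Minimality of the cost at [s*] reduces,
   with [t = s/s*], to the tangent-line inequality [t^(-al) > 1 - al (t - 1)]. *)

Lemma Rpower_gt0 x y : 0 < Rpower x y.
Proof. apply exp_pos. Qed.

Lemma Rpower_plus1 x y : 0 < x -> Rpower x (y + 1) = Rpower x y * x.
Proof. intros Hx. rewrite Rpower_plus, Rpower_1; auto. Qed.

Lemma Rpower_le1 x y : 0 < x <= 1 -> 0 <= y -> Rpower x y <= 1.
Proof.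
  intros Hx Hy.
  assert (E : Rpower 1 y = 1) by (unfold Rpower; rewrite ln_1, Rmult_0_r; apply exp_0).
  rewrite <- E. apply Rle_Rpower_l; lra.
Qed.

Lemma Rpower_opp_gt_tangent t y : 0 < t -> t <> 1 -> 0 < y ->
  1 - y * (t - 1) < Rpower t (- y).
Proof.
  intros Ht Ht1 Hy.
  assert (Hln : ln t <> 0).
  { intro E. apply Ht1. rewrite <- (exp_ln t), E by exact Ht. apply exp_0. }
  assert (Hlt : 1 + ln t < t) by (rewrite <- (exp_ln t) at 2 by exact Ht; now apply exp_ineq1).
  pose proof (exp_ineq1_le (- y * ln t)). unfold Rpower. nra.
Qed.

Lemma derivable_pt_lim_inverse_incr (f g df : R -> R) (lb ub x : R) :
  lb < x < ub ->
  (forall y z, lb <= y -> y <= z -> z <= ub -> g y <= g z) ->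
  (forall y, lb <= y <= ub -> f (g y) = y) ->
  (forall s t, g lb <= s -> s < t -> t <= g ub -> f s < f t) ->
  (forall s, g lb <= s <= g ub -> derivable_pt_lim f s (df s)) ->
  df (g x) <> 0 ->
  derivable_pt_lim g x (/ df (g x)).
Proof.
  intros Hx Hg_mono HfgK Hf_incr Hf_der Hdf.
  set (Prf := fun s (Hs : g lb <= s <= g ub) => exist _ (df s) (Hf_der s Hs)
                : derivable_pt f s).
  assert (Hg_range : forall y, lb <= y <= ub -> g lb <= g y <= g ub)
    by (intros y Hy; split; apply Hg_mono; lra).
  assert (Hcomp : forall y, lb <= y <= ub -> comp f g y = id y) by exact HfgK.
  assert (Hglu : g lb < g ub).
  { destruct (Hg_mono lb ub) as [|E]; try lra.
    apply (f_equal f) in E. rewrite !HfgK in E; lra. }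
  assert (Hcont : continuity_pt g x).
  { apply (Ranalysis5.continuity_pt_recip_interv f g (g lb) (g ub) Hglu).
    - intros s t Hs Hst Ht. now apply Hf_incr.
    - intros y. rewrite !HfgK by lra. intros; apply Hcomp; lra.
    - intros y. rewrite !HfgK by lra. intros; apply Hg_range; lra.
    - intros s Hs. apply derivable_continuous_pt, (Prf s Hs).
    - rewrite !HfgK; lra. }
  pose proof (Hg_range x ltac:(lra)) as Hgx.
  pose proof (Ranalysis5.derivable_pt_lim_recip_interv f g lb ub x Prf Hcont
                ltac:(lra) Hx Hgx Hcomp Hdf) as H.
  simpl in H. now rewrite <- Rdiv_1_l.
Qed.

Definition sstar_inv (c al s : R) : R :=
  ((al + 1) * s + c * Rpower s (al + 1)) / al.

Lemma sstar_invE c al s : 0 < al -> 0 < s ->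
  sstar_inv c al s = s * (al + 1 + c * Rpower s al) / al.
Proof. intros Hal Hs. unfold sstar_inv. rewrite Rpower_plus1 by exact Hs. field. lra. Qed.

Lemma sstar_inv_lt_ratio c1 c2 al s : 0 < al -> 0 < s -> c1 < c2 ->
  sstar_inv c1 al s < sstar_inv c2 al s.
Proof.
  intros Hal Hs Hc. pose proof (Rpower_gt0 s (al + 1)). unfold sstar_inv, Rdiv.
  apply Rmult_lt_compat_r; [apply Rinv_0_lt_compat; lra | nra].
Qed.

Lemma sstar_inv_le_ratio c1 c2 al s : 0 < al -> 0 < s -> c1 <= c2 ->
  sstar_inv c1 al s <= sstar_inv c2 al s.
Proof.
  intros Hal Hs [Hc | <-]; [left; now apply sstar_inv_lt_ratio | lra].
Qed.

Section SstarInv.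

Variables c al : R.
Hypotheses (Hc : 0 <= c) (Hal : 0 < al).

Lemma sstar_inv_gt s : 0 < s -> s < sstar_inv c al s.
Proof.
  intros Hs. pose proof (Rpower_gt0 s al).
  rewrite sstar_invE by assumption.
  replace (s * (al + 1 + c * Rpower s al) / al)
    with (s + s * (1 + c * Rpower s al) / al) by (field; lra).
  assert (0 <= c * Rpower s al) by (apply Rmult_le_pos; lra).
  assert (0 < s * (1 + c * Rpower s al) / al) by (apply Rdiv_lt_0_compat; nra).
  lra.
Qed.

Lemma sstar_inv_lt s1 s2 : 0 < s1 -> s1 < s2 ->
  sstar_inv c al s1 < sstar_inv c al s2.
Proof.
  intros Hs1 Hs12. unfold sstar_inv, Rdiv.
  assert (Rpower s1 (al + 1) < Rpower s2 (al + 1)) by (apply Rlt_Rpower_l; lra).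
  apply Rmult_lt_compat_r; [apply Rinv_0_lt_compat; lra | nra].
Qed.

Lemma sstar_inv_lt_iff s1 s2 : 0 < s1 -> 0 < s2 ->
  sstar_inv c al s1 < sstar_inv c al s2 <-> s1 < s2.
Proof.
  intros Hs1 Hs2. split; [|now apply sstar_inv_lt].
  intros H. destruct (Rtotal_order s1 s2) as [|[E|Hlt]]; [easy| |].
  - subst; lra.
  - pose proof (sstar_inv_lt s2 s1 Hs2 Hlt); lra.
Qed.

Lemma sstar_inv_le_iff s1 s2 : 0 < s1 -> 0 < s2 ->
  sstar_inv c al s1 <= sstar_inv c al s2 <-> s1 <= s2.
Proof.
  intros Hs1 Hs2. pose proof (sstar_inv_lt_iff s2 s1 Hs2 Hs1). split; intros; lra.
Qed.

Lemma sstar_inv_inj s1 s2 : 0 < s1 -> 0 < s2 ->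
  sstar_inv c al s1 = sstar_inv c al s2 -> s1 = s2.
Proof.
  intros Hs1 Hs2 E. apply Rle_antisym; apply sstar_inv_le_iff; lra.
Qed.

Lemma is_derive_sstar_inv s : 0 < s ->
  is_derive (sstar_inv c al) s ((al + 1) * (1 + c * Rpower s al) / al).
Proof.
  intros Hs.
  assert (Hpow : is_derive (fun x => Rpower x (al + 1)) s ((al + 1) * Rpower s al)).
  { apply is_derive_Reals. replace al with (al + 1 - 1) at 2 by ring.
    now apply derivable_pt_lim_power. }
  apply (is_derive_ext (fun x => / al * ((al + 1) * x + c * Rpower x (al + 1)))).
  { intros t. apply Rmult_comm. }
  replace ((al + 1) * (1 + c * Rpower s al) / al)
    with (/ al * ((al + 1) * 1 + c * ((al + 1) * Rpower s al))) by (field; lra).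
  apply is_derive_scal, (is_derive_plus (fun x => (al + 1) * x)).
  - apply is_derive_scal, is_derive_Reals, derivable_pt_lim_id.
  - now apply is_derive_scal.
Qed.

Lemma sstar_inv_continuous s : 0 < s -> continuity_pt (sstar_inv c al) s.
Proof.
  intros Hs. apply derivable_continuous_pt.
  eexists. apply is_derive_Reals, is_derive_sstar_inv, Hs.
Qed.

Lemma sstar_inv_surj n : 0 < n -> exists s, 0 < s < n /\ sstar_inv c al s = n.
Proof.
  intros Hn.
  (* Since [s0 <= 1], [sstar_inv c al s0 <= (al + 1 + c) s0 / al = n / (1 + n)]. *)
  set (s0 := al * n / ((al + 1 + c) * (1 + n))).
  assert (Hs0 : 0 < s0 < n /\ s0 <= 1).
  { unfold s0. split; [split|].
    - apply Rdiv_lt_0_compat; nra.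
    - apply Rmult_lt_reg_r with ((al + 1 + c) * (1 + n)); [nra|].
      field_simplify; nra.
    - apply Rmult_le_reg_r with ((al + 1 + c) * (1 + n)); [nra|].
      field_simplify; nra. }
  assert (Hlow : sstar_inv c al s0 < n).
  { rewrite sstar_invE by lra.
    assert (c * Rpower s0 al <= c * 1)
      by (apply Rmult_le_compat_l, Rpower_le1; lra).
    apply Rle_lt_trans with (s0 * (al + 1 + c) / al).
    - unfold Rdiv. apply Rmult_le_compat_r; [left; apply Rinv_0_lt_compat; lra | nra].
    - unfold s0. apply Rmult_lt_reg_r with (1 + n); [lra|].
      field_simplify; nra. }
  pose proof (sstar_inv_gt n Hn) as Hhigh.
  destruct (Ranalysis5.IVT_interv (fun x => sstar_inv c al x - n) s0 n)
    as [s [Hs Hroot]]; try lra.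
  - intros x Hx. apply continuity_pt_minus, continuity_pt_const; [|easy].
    apply sstar_inv_continuous; lra.
  - exists s. split; [|lra]. split; [lra|].
    destruct Hs as [_ [Hlt | ->]]; [easy | lra].
Qed.

End SstarInv.

Lemma FeqE a b al n s : 0 < a -> 0 < al -> 0 < s ->
  Feq a b al n s = al * a * Rpower s (- al - 1) * (n - sstar_inv (b / a) al s).
Proof.
  intros Ha Hal Hs. unfold Feq, sstar_inv.
  replace (- al - 1) with (- (al + 1)) by ring.
  rewrite !Rpower_Ropp, Rpower_plus1 by exact Hs.
  pose proof (Rpower_gt0 s al). field. repeat split; lra.
Qed.

Lemma Feq_eq0 a b al n s : 0 < a -> 0 < al -> 0 < s ->
  Feq a b al n s = 0 <-> sstar_inv (b / a) al s = n.
Proof.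
  intros Ha Hal Hs. rewrite FeqE by assumption.
  pose proof (Rpower_gt0 s (- al - 1)).
  assert (0 < al * a * Rpower s (- al - 1)) by (repeat apply Rmult_lt_0_compat; lra).
  split; intros E.
  - destruct (Rmult_integral _ _ E); lra.
  - rewrite E. ring.
Qed.

Section Sstar.

Variables a b al : R.
Hypotheses (Ha : 0 < a) (Hb : 0 <= b) (Hal : 0 < al).

Let Hc : 0 <= b / a.
Proof. apply Rdiv_le_0_compat; assumption. Qed.

Lemma sstar_spec n : 0 < n ->
  0 < sstar a b al n < n /\ Feq a b al n (sstar a b al n) = 0.
Proof.
  intros Hn. unfold sstar. apply epsilon_spec.
  destruct (sstar_inv_surj (b / a) al Hc Hal n Hn) as [s [Hs E]].
  exists s. split; [exact Hs|]. apply Feq_eq0; lra.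
Qed.

Lemma sstar_gt0 n : 0 < n -> 0 < sstar a b al n.
Proof. intros Hn. apply (sstar_spec n Hn). Qed.

Lemma sstarK n : 0 < n -> sstar_inv (b / a) al (sstar a b al n) = n.
Proof.
  intros Hn. destruct (sstar_spec n Hn) as [Hs E].
  apply Feq_eq0 in E; lra.
Qed.

Lemma sstar_unique n s : 0 < s -> Feq a b al n s = 0 -> s = sstar a b al n.
Proof.
  intros Hs E. apply Feq_eq0 in E; try assumption.
  assert (Hn : 0 < n) by (pose proof (sstar_inv_gt _ _ Hc Hal s Hs); lra).
  apply (sstar_inv_inj (b / a) al Hc Hal); [exact Hs | now apply sstar_gt0 |].
  now rewrite sstarK.
Qed.

Lemma sstar_invK s : 0 < s -> sstar a b al (sstar_inv (b / a) al s) = s.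
Proof.
  intros Hs. symmetry. apply sstar_unique; [exact Hs|].
  apply Feq_eq0; auto.
Qed.

Lemma sstar_lt_n n1 n2 : 0 < n1 -> n1 < n2 -> sstar a b al n1 < sstar a b al n2.
Proof.
  intros Hn1 Hn12.
  apply (sstar_inv_lt_iff (b / a) al Hc Hal); try (apply sstar_gt0; lra).
  rewrite !sstarK; lra.
Qed.

Lemma sstar_le_n n1 n2 : 0 < n1 -> n1 <= n2 -> sstar a b al n1 <= sstar a b al n2.
Proof.
  intros Hn1 [Hlt | <-]; [left; now apply sstar_lt_n | lra].
Qed.

Lemma sstar_gt_of_sstar_inv_lt T m : 0 < T -> sstar_inv (b / a) al T < m ->
  T < sstar a b al m.
Proof.
  intros HT Hm. pose proof (sstar_inv_gt _ _ Hc Hal T HT).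
  rewrite <- (sstar_invK T HT). apply sstar_lt_n; lra.
Qed.

Lemma sstar_div_n n : 0 < n ->
  sstar a b al n / n = al / (al + 1 + b / a * Rpower (sstar a b al n) al).
Proof.
  intros Hn. pose proof (sstarK n Hn) as E. pose proof (sstar_gt0 n Hn).
  rewrite sstar_invE in E by assumption.
  set (s := sstar a b al n) in *.
  assert (0 <= b / a * Rpower s al)
    by (apply Rmult_le_pos; [exact Hc | left; apply Rpower_gt0]).
  set (u := b / a * Rpower s al) in *.
  rewrite <- E. field. repeat split; lra.
Qed.

Lemma derivable_pt_lim_sstar n : 0 < n ->
  derivable_pt_lim (sstar a b al) n
    (al / ((al + 1) * (1 + b / a * Rpower (sstar a b al n) al))).
Proof.
  intros Hn.
  assert (0 <= b / a * Rpower (sstar a b al n) al)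
    by (apply Rmult_le_pos; [exact Hc | left; apply Rpower_gt0]).
  replace (al / ((al + 1) * (1 + b / a * Rpower (sstar a b al n) al)))
    with (/ ((al + 1) * (1 + b / a * Rpower (sstar a b al n) al) / al))
    by (set (u := b / a * Rpower (sstar a b al n) al) in *; field; repeat split; lra).
  apply (derivable_pt_lim_inverse_incr (sstar_inv (b / a) al) (sstar a b al)
           (fun s => (al + 1) * (1 + b / a * Rpower s al) / al) (n / 2) (2 * n)).
  - lra.
  - intros y z Hy Hyz Hz. apply sstar_le_n; lra.
  - intros y Hy. apply sstarK; lra.
  - intros s t Hs Hst Ht. pose proof (sstar_gt0 (n / 2) ltac:(lra)).
    apply sstar_inv_lt; lra.
  - intros s Hs. pose proof (sstar_gt0 (n / 2) ltac:(lra)).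
    apply is_derive_Reals, is_derive_sstar_inv; lra.
  - apply Rgt_not_eq, Rdiv_lt_0_compat; nra.
Qed.

End Sstar.

Lemma sstar_lt_ratio a1 b1 a2 b2 al n :
  0 < a1 -> 0 <= b1 -> 0 < a2 -> 0 <= b2 -> 0 < al -> 0 < n ->
  b2 / a2 < b1 / a1 -> sstar a1 b1 al n < sstar a2 b2 al n.
Proof.
  intros Ha1 Hb1 Ha2 Hb2 Hal Hn Hc.
  pose proof (sstarK a2 b2 al Ha2 Hb2 Hal n Hn) as E2.
  pose proof (sstar_gt0 a2 b2 al Ha2 Hb2 Hal n Hn).
  set (s2 := sstar a2 b2 al n) in *.
  apply (sstar_inv_lt_iff (b1 / a1) al); try apply Rdiv_le_0_compat;
    try apply sstar_gt0; try assumption.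
  rewrite sstarK by assumption.
  rewrite <- E2 at 1. now apply sstar_inv_lt_ratio.
Qed.

Lemma sstar_le_ratio a1 b1 a2 b2 al n :
  0 < a1 -> 0 <= b1 -> 0 < a2 -> 0 <= b2 -> 0 < al -> 0 < n ->
  b2 / a2 <= b1 / a1 -> sstar a1 b1 al n <= sstar a2 b2 al n.
Proof.
  intros Ha1 Hb1 Ha2 Hb2 Hal Hn Hc.
  pose proof (sstarK a2 b2 al Ha2 Hb2 Hal n Hn) as E2.
  pose proof (sstar_gt0 a2 b2 al Ha2 Hb2 Hal n Hn).
  set (s2 := sstar a2 b2 al n) in *.
  apply (sstar_inv_le_iff (b1 / a1) al); try apply Rdiv_le_0_compat;
    try apply sstar_gt0; try assumption.
  rewrite sstarK by assumption.
  rewrite <- E2 at 1. now apply sstar_inv_le_ratio.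
Qed.

Lemma Rpower_div x y z : 0 < x -> 0 < y -> Rpower (x / y) z = Rpower x z / Rpower y z.
Proof.
  intros Hx Hy. unfold Rpower. rewrite ln_div by assumption.
  unfold Rdiv. rewrite <- exp_Ropp, <- exp_plus. f_equal. ring.
Qed.

Lemma cost_gap a b al n x s : 0 < a -> 0 < x < n -> 0 < s < n ->
  Feq a b al n x = 0 ->
  (n - s) * (cost a b al n s - cost a b al n x)
  = a * Rpower x (- al) * (Rpower (s / x) (- al) - 1 + al * (s / x - 1)).
Proof.
  intros Ha Hx Hs E. unfold Feq in E. unfold cost.
  replace (- al - 1) with (- al + - 1) in E by ring.
  rewrite Rpower_plus, Rpower_Ropp with (y := 1), Rpower_1 in E by lra.
  rewrite Rpower_div by lra.
  assert (Eb : b = al * a * n * Rpower x (- al) * / x - (al + 1) * a * Rpower x (- al))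
    by lra.
  subst b. pose proof (Rpower_gt0 s (- al)). pose proof (Rpower_gt0 x (- al)).
  field. repeat split; lra.
Qed.

Lemma cost_lt a b al n x s : 0 < a -> 0 < al -> 0 < x < n -> 0 < s < n -> s <> x ->
  Feq a b al n x = 0 -> cost a b al n x < cost a b al n s.
Proof.
  intros Ha Hal Hx Hs Hsx E.
  pose proof (cost_gap a b al n x s Ha Hx Hs E) as Gap.
  assert (Ht : 1 - al * (s / x - 1) < Rpower (s / x) (- al)).
  { apply Rpower_opp_gt_tangent; [apply Rdiv_lt_0_compat; lra | | exact Hal].
    intros E1. apply Hsx. rewrite <- (Rmult_1_l x), <- E1. field. lra. }
  assert (0 < a * Rpower x (- al)) by (pose proof (Rpower_gt0 x (- al)); nra).
  nra.
Qed.

Lemma is_lim_sstar_div_n a b al : 0 < a -> 0 < b -> 0 < al ->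
  is_lim (fun m => sstar a b al m / m) p_infty 0.
Proof.
  intros Ha Hb Hal. apply is_lim_spec. intros eps. simpl.
  pose proof (cond_pos eps) as Heps.
  assert (Hc : 0 < b / a) by (apply Rdiv_lt_0_compat; assumption).
  set (T := Rpower (al / (eps * (b / a))) (/ al)).
  assert (HT : 0 < T) by apply Rpower_gt0.
  assert (HTal : Rpower T al = al / (eps * (b / a))).
  { unfold T. rewrite Rpower_mult, Rinv_l by lra.
    apply Rpower_1, Rdiv_lt_0_compat; nra. }
  exists (sstar_inv (b / a) al T). intros m Hm.
  pose proof (sstar_inv_gt (b / a) al (Rlt_le _ _ Hc) Hal T HT).
  assert (Hs : T < sstar a b al m)
    by (apply sstar_gt_of_sstar_inv_lt; lra).
  assert (HP : al / (eps * (b / a)) < Rpower (sstar a b al m) al)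
    by (rewrite <- HTal; apply Rlt_Rpower_l; lra).
  rewrite sstar_div_n by lra.
  set (P := Rpower (sstar a b al m) al) in *.
  assert (HcP : al < eps * (b / a * P)).
  { apply Rmult_lt_compat_l with (r := eps * (b / a)) in HP; [|nra].
    replace (eps * (b / a) * (al / (eps * (b / a)))) with al in HP by (field; lra).
    lra. }
  assert (Hpos : 0 < al + 1 + b / a * P) by (pose proof (Rpower_gt0 (sstar a b al m) al); nra).
  rewrite Rminus_0_r, Rabs_pos_eq by (left; apply Rdiv_lt_0_compat; lra).
  apply Rmult_lt_reg_r with (al + 1 + b / a * P); [exact Hpos|].
  unfold Rdiv at 1. rewrite Rmult_assoc, Rinv_l by lra. nra.
Qed.

Lemma is_derive_sstar_div_n a b al n : 0 < a -> 0 <= b -> 0 < al -> 0 < n ->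
  is_derive (fun m => sstar a b al m / m) n
    (- (al * (b / a) * Rpower (sstar a b al n) (al + 1))
     / ((al + 1) * (1 + b / a * Rpower (sstar a b al n) al) * n²)).
Proof.
  intros Ha Hb Hal Hn. apply is_derive_Reals.
  pose proof (derivable_pt_lim_div _ _ n _ _ (derivable_pt_lim_sstar a b al Ha Hb Hal n Hn)
                (derivable_pt_lim_id n) ltac:(unfold id; lra)) as Hd.
  pose proof (sstarK a b al Ha Hb Hal n Hn) as E.
  pose proof (sstar_gt0 a b al Ha Hb Hal n Hn).
  assert (0 <= b / a) by (apply Rdiv_le_0_compat; lra).
  set (s := sstar a b al n) in *. set (c := b / a) in *.
  rewrite sstar_invE in E by assumption.
  rewrite Rpower_plus1 by assumption.
  assert (0 <= c * Rpower s al) by (pose proof (Rpower_gt0 s al); nra).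
  set (u := c * Rpower s al) in *.
  replace (- (al * c * (Rpower s al * s)) / ((al + 1) * (1 + u) * n²))
    with ((al / ((al + 1) * (1 + u)) * id n - 1 * s) / n²).
  - exact Hd.
  - unfold id, Rsqr. rewrite <- E.
    replace (al * c * (Rpower s al * s)) with (al * u * s) by (unfold u; ring).
    field. repeat split; lra.
Qed.

Lemma sstar_div_n_derive_bounds a b al n : 0 < a -> 0 <= b -> 0 < al -> 0 < n ->
  exists d, is_derive (fun m => sstar a b al m / m) n d /\
    - (al / (al + 1)) * (b / a) * Rpower n (al - 1) <= d <= 0.
Proof.
  intros Ha Hb Hal Hn. eexists. split; [now apply is_derive_sstar_div_n|].
  pose proof (sstar_spec a b al Ha Hb Hal n Hn) as [Hs _].
  assert (Hc : 0 <= b / a) by (apply Rdiv_le_0_compat; lra).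
  set (s := sstar a b al n) in *. set (c := b / a) in *.
  assert (Hu : 0 <= c * Rpower s al) by (pose proof (Rpower_gt0 s al); nra).
  set (u := c * Rpower s al) in *.
  set (K := al * c / ((al + 1) * n²)).
  assert (HK : 0 <= K) by (apply Rdiv_le_0_compat; unfold Rsqr; nra).
  set (Q := Rpower s (al + 1)).
  assert (HQ : 0 < Q) by apply Rpower_gt0.
  assert (HQn : Q <= Rpower n (al - 1) * n²).
  { unfold Rsqr. rewrite <- Rmult_assoc, <- !Rpower_plus1 by lra.
    replace (al - 1 + 1 + 1) with (al + 1) by ring.
    apply Rle_Rpower_l; lra. }
  assert (HQu : Q / (1 + u) <= Q).
  { apply Rmult_le_reg_r with (1 + u); [lra|].
    unfold Rdiv. rewrite Rmult_assoc, Rinv_l by lra. nra. }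
  replace (- (al * c * Q) / ((al + 1) * (1 + u) * n²)) with (- (K * (Q / (1 + u))))
    by (unfold K, Rsqr; field; repeat split; nra).
  replace (- (al / (al + 1)) * c * Rpower n (al - 1))
    with (- (K * (Rpower n (al - 1) * n²))) by (unfold K, Rsqr; field; split; nra).
  assert (0 <= Q / (1 + u)) by (apply Rdiv_le_0_compat; lra).
  split; [apply Ropp_le_contravar, Rmult_le_compat_l |]; nra.
Qed.

Lemma sstar_le_a a1 a2 b al n : 0 < a1 -> a1 <= a2 -> 0 <= b -> 0 < al -> 0 < n ->
  sstar a1 b al n <= sstar a2 b al n.
Proof.
  intros. apply sstar_le_ratio; try lra.
  unfold Rdiv. apply Rmult_le_compat_l; [lra|]. apply Rinv_le_contravar; lra.
Qed.

Lemma sstar_lt_a a1 a2 b al n : 0 < a1 -> a1 < a2 -> 0 < b -> 0 < al -> 0 < n ->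
  sstar a1 b al n < sstar a2 b al n.
Proof.
  intros. apply sstar_lt_ratio; try lra.
  unfold Rdiv. apply Rmult_lt_compat_l; [lra|]. apply Rinv_lt_contravar; nra.
Qed.

Lemma sstar_lt_b a b1 b2 al n : 0 < a -> 0 <= b1 -> b1 < b2 -> 0 < al -> 0 < n ->
  sstar a b2 al n < sstar a b1 al n.
Proof.
  intros. apply sstar_lt_ratio; try lra.
  unfold Rdiv. apply Rmult_lt_compat_r; [apply Rinv_0_lt_compat|]; lra.
Qed.

Lemma sstar0_div_n a al n : 0 < a -> 0 < al -> 0 < n ->
  sstar a 0 al n / n = al / (al + 1).
Proof.
  intros. rewrite sstar_div_n by lra. unfold Rdiv at 2. rewrite Rmult_0_l. f_equal. ring.
Qed.

Lemma sstar_div_n_le_n a b al n1 n2 : 0 < a -> 0 <= b -> 0 < al -> 0 < n1 -> n1 <= n2 ->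
  sstar a b al n2 / n2 <= sstar a b al n1 / n1.
Proof.
  intros Ha Hb Hal Hn1 Hn12. rewrite !sstar_div_n by lra.
  pose proof (sstar_le_n a b al Ha Hb Hal n1 n2 Hn1 Hn12).
  pose proof (sstar_gt0 a b al Ha Hb Hal n1 Hn1).
  assert (Rpower (sstar a b al n1) al <= Rpower (sstar a b al n2) al)
    by (apply Rle_Rpower_l; lra).
  assert (0 <= b / a) by (apply Rdiv_le_0_compat; lra).
  pose proof (Rpower_gt0 (sstar a b al n1) al).
  unfold Rdiv at 1 3. apply Rmult_le_compat_l; [lra|].
  apply Rinv_le_contravar; [nra|].
  apply Rplus_le_compat_l, Rmult_le_compat_l; assumption.
Qed.

Theorem proposition1 :
  (* well-definedness: s* is the unique root in (0,n) and the unique minimizer *)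
  (forall a b al n, 0 < a -> 0 <= b -> 0 < al -> 0 < n ->
     (0 < sstar a b al n < n /\ Feq a b al n (sstar a b al n) = 0) /\
     (forall s, 0 < s < n -> Feq a b al n s = 0 -> s = sstar a b al n) /\
     (forall s, 0 < s < n -> s <> sstar a b al n ->
        cost a b al n (sstar a b al n) < cost a b al n s)) /\
  (* (i) monotonicity in a *)
  (forall a1 a2 b al n, 0 < a1 -> a1 <= a2 -> 0 <= b -> 0 < al -> 0 < n ->
     sstar a1 b al n <= sstar a2 b al n) /\
  (forall a1 a2 b al n, 0 < a1 -> a1 < a2 -> 0 < b -> 0 < al -> 0 < n ->
     sstar a1 b al n < sstar a2 b al n) /\
  (* (ii) strictly decreasing in b *)
  (forall a b1 b2 al n, 0 < a -> 0 <= b1 -> b1 < b2 -> 0 < al -> 0 < n ->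
     sstar a b2 al n < sstar a b1 al n) /\
  (* (iii) strictly increasing in n *)
  (forall a b al n1 n2, 0 < a -> 0 <= b -> 0 < al -> 0 < n1 -> n1 < n2 ->
     sstar a b al n1 < sstar a b al n2) /\
  (* (iv) b = 0 *)
  (forall a al n, 0 < a -> 0 < al -> 0 < n ->
     sstar a 0 al n / n = al / (al + 1)) /\
  (* (v) the fraction s*/n *)
  (forall a1 a2 b al n, 0 < a1 -> a1 <= a2 -> 0 <= b -> 0 < al -> 0 < n ->
     sstar a1 b al n / n <= sstar a2 b al n / n) /\
  (forall a1 a2 b al n, 0 < a1 -> a1 < a2 -> 0 < b -> 0 < al -> 0 < n ->
     sstar a1 b al n / n < sstar a2 b al n / n) /\
  (forall a b1 b2 al n, 0 < a -> 0 <= b1 -> b1 < b2 -> 0 < al -> 0 < n ->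
     sstar a b2 al n / n < sstar a b1 al n / n) /\
  (forall a b al n1 n2, 0 < a -> 0 <= b -> 0 < al -> 0 < n1 -> n1 <= n2 ->
     sstar a b al n2 / n2 <= sstar a b al n1 / n1) /\
  (forall a b al, 0 < a -> 0 < b -> 0 < al ->
     is_lim (fun m => sstar a b al m / m) p_infty 0) /\
  (forall a b al n, 0 < a -> 0 <= b -> 0 < al -> al < 1 -> 0 < n ->
     exists d, is_derive (fun m => sstar a b al m / m) n d /\
       - (al / (al + 1)) * (b / a) * Rpower n (al - 1) <= d <= 0).
Proof.
  split.
  { intros a b al n Ha Hb Hal Hn.
    pose proof (sstar_spec a b al Ha Hb Hal n Hn) as [Hs Hroot].
    split; [easy | split].
    - intros s Hs' E. now apply sstar_unique.
    - intros s Hs' Hne. now apply cost_lt. }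
  split; [exact sstar_le_a|].
  split; [exact sstar_lt_a|].
  split; [exact sstar_lt_b|].
  split; [intros; now apply sstar_lt_n|].
  split; [exact sstar0_div_n|].
  split; [intros; apply Rmult_le_compat_r; [left; now apply Rinv_0_lt_compat | now apply sstar_le_a]|].
  split; [intros; apply Rmult_lt_compat_r; [now apply Rinv_0_lt_compat | now apply sstar_lt_a]|].
  split; [intros; apply Rmult_lt_compat_r; [now apply Rinv_0_lt_compat | now apply sstar_lt_b]|].
  split; [exact sstar_div_n_le_n|].
  split; [exact is_lim_sstar_div_n|].
  (* The derivative bounds hold for every [al > 0]. *)
  intros a b al n Ha Hb Hal _ Hn. now apply sstar_div_n_derive_bounds.
Qed.
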